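(* Let $n,d\ge1$ and let $X$ be a lazy simple random walk on $\mathbb{Z}_n^d$ started at $X_0=0$. Let $f:\{1,2,\dots\}\to\mathbb{Z}_n^d$ be any function and let $a=(\lfloor n/2\rfloor,\dots,\lfloor n/2\rfloor)\in\mathbb{Z}_n^d$. Then for all $t\ge1$, \[ \mathbb{P}_0\big(X_1\neq f(1),\dots,X_t\neq f(t)\big)\le \mathbb{P}_0\big(X_1\neq a,\dots,X_t\neq a\big). \]
   Context: $\mathbb{Z}_n=\{0,1,\dots,n-1\}$ with addition mod $n$. The lazy simple random walk on $\mathbb{Z}_n^d$ is the Markov chain which at each step stays put with probability $1/2$ and otherwise moves from $x$ to $x\pm e_i$ ($i=1,\dots,d$, $e_i$ the standard unit vectors), each of these $2d$ moves having probability $1/(4d)$. *)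

From HB Require Import structures.
From mathcomp Require Import all_boot all_order all_algebra.
Set Implicit Arguments. Unset Strict Implicit. Unset Printing Implicit Defensive.
Import Order.TTheory GRing.Theory Num.Theory.
Local Open Scope ring_scope.

(* Z_n^d : points are finite functions 'I_d -> 'I_n, coordinates taken mod n. *)
Definition pt (n d : nat) := {ffun 'I_d -> 'I_n}.

Definition is_plus_e (n d : nat) (i : 'I_d) (x y : pt n d) : bool :=
  [forall j, val (y j) == (if j == i then (val (x i) + 1) %% n else val (x j))%N].

Definition is_minus_e (n d : nat) (i : 'I_d) (x y : pt n d) : bool :=
  [forall j, val (y j) == (if j == i then (val (x i) + n - 1) %% n else val (x j))%N].

Definition is_origin (n d : nat) (x : pt n d) : bool := [forall j, val (x j) == 0%N].

(* transition kernel of the lazy simple random walk on Z_n^d: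
   stay with prob 1/2, move to x +- e_i with prob 1/(4d) each
   (moves that coincide, e.g. when n <= 2, have their probabilities added) *)
Definition lazyP (R : realFieldType) (n d : nat) (x y : pt n d) : R :=
  (x == y)%:R / 2 +
  \sum_(i < d) ((is_plus_e i x y)%:R + (is_minus_e i x y)%:R) / (4 * d%:R).

(* P_0(X_1 <> f 1, ..., X_t <> f t): sum over paths p(0),...,p(t) with p(0) = 0
   and p(k) <> f k for 1 <= k <= t of the product of transition probabilities *)
Definition avoid_prob (R : realFieldType) (n d t : nat) (f : nat -> pt n d) : R :=
  \sum_(p : {ffun 'I_t.+1 -> pt n d} |
          is_origin (p ord0) && [forall k : 'I_t, p (lift ord0 k) != f k.+1])
    \prod_(k < t) lazyP R (p (widen_ord (leqnSn t) k)) (p (lift ord0 k)).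

From mathcomp Require Import all_boot all_order all_algebra.
From mathcomp Require Import zify ring lra.
Set Implicit Arguments. Unset Strict Implicit. Unset Printing Implicit Defensive.
Import Order.TTheory GRing.Theory Num.Theory.
Local Open Scope ring_scope.

(** The proof is a reflection argument.  Let [s] reflect the torus in one
    coordinate and let [H] be one of the two halves it exchanges, chosen to
    contain the origin.  The lazy kernel [P] is [s]-invariant, and for [x], [y]
    in [H] a step from [y] to [x] is at least as likely as one from [s y] to [x].
    Let [u_t y] be the mass of the walks that avoid [f 1, ..., f t] and are at
    [y] at time [t], and [w_t] the same for the targets [f k] moved to the far
    half.  By induction on
    [t], [w_t] is nonnegative and each of [u_t], [u_t \o s], [w_t \o s] is
    dominated by [w_t] along every orbit [{y, s y}] ([paired_le]): on [y] alone
    and on the sum over the orbit.  Summing over orbits, the far targets are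
    avoided with larger probability.
    In each coordinate, reflections about 1/2, 3/2, ..., n./2 - 1/2 squeeze
    every point into [n./2, n - n./2], and a last reflection about 0 sends it to
    n./2; composing over all coordinates turns [f] into the constant [a]. *)

Lemma ler_pair_combination (R : realDomainType) (a b p q p' q' : R) :
  0 <= b <= a -> p <= p' -> p + q <= p' + q' -> p * a + q * b <= p' * a + q' * b.
Proof.
move=> /andP[b_ge0 le_ba] le_pp' le_sum.
rewrite -subr_ge0 (_ : _ - _ = (p' - p) * (a - b) + (p' + q' - (p + q)) * b); last by ring.
by rewrite addr_ge0 // mulr_ge0 // subr_ge0.
Qed.

Section ReflectionPrinciple.
Variables (R : realFieldType) (T : finType) (P : T -> T -> R) (s : T -> T) (H : pred T).
Hypotheses (P_ge0 : forall x y, 0 <= P x y) (sK : involutive s)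
  (H_reflect : forall x, H x -> ~~ H (s x))
  (H_cover : forall x, [|| H x, H (s x) | s x == x])
  (P_reflect : forall x y, P (s x) (s y) = P x y)
  (P_same_side : forall x y, H x -> H y -> P (s y) x <= P y x).

Lemma side_not_fixed x : H x -> (s x == x) = false.
Proof. by move=> hx; apply: contraTF (H_reflect hx) => /eqP ->; rewrite hx. Qed.

Lemma sum_reflect_pairs (F : T -> R) :
  \sum_y F y = \sum_(y | H y) (F y + F (s y)) + \sum_(y | s y == y) F y.
Proof.
rewrite big_split /= (bigID H) /= -addrA; congr (_ + _).
rewrite (bigID (fun y => s y == y)) /= addrC; congr (_ + _).
  rewrite [LHS](reindex_inj (inv_inj sK)) /=; apply: eq_bigl => y /=.
  rewrite sK; case hy: (H y); first by rewrite (negbTE (H_reflect hy)) eq_sym side_not_fixed.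
  by have := H_cover y; rewrite hy /= => /orP[->|/eqP ->] //; rewrite eqxx andbF.
by apply: eq_bigl => y; case hy: (H y); rewrite //= side_not_fixed.
Qed.

Definition push (v : T -> R) (y : T) : R := \sum_x v x * P x y.
Definition kill (g : T) (v : T -> R) (y : T) : R := if y == g then 0 else v y.
Definition to_far_side (g : T) : T := if H g then s g else g.

Fixpoint survival (u0 : T -> R) (f : nat -> T) (t : nat) : T -> R :=
  if t is t'.+1 then kill (f t) (push (survival u0 f t')) else u0.

Definition paired_le (u w : T -> R) : Prop :=
  (forall y, H y -> u y <= w y /\ u y + u (s y) <= w y + w (s y)) /\
  (forall y, s y == y -> u y <= w y).

Definition dominated (u w : T -> R) : Prop :=
  [/\ forall x, 0 <= w x, paired_le u w, paired_le (u \o s) w & paired_le (w \o s) w].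

Lemma eq_paired_le u w u' w' :
  paired_le u w -> u =1 u' -> w =1 w' -> paired_le u' w'.
Proof.
move=> [uw uf] eu ew; split=> [y /uw|y /uf]; rewrite !eu !ew //.
Qed.

Lemma paired_le_refl u : paired_le u u.
Proof. by split. Qed.

Lemma paired_le_reflect u : (forall x, H x -> u (s x) <= u x) -> paired_le (u \o s) u.
Proof.
move=> le_su; split=> [y hy|y /eqP /= ->] //=.
by rewrite sK addrC; split=> //; apply: le_su.
Qed.

Lemma paired_le_sum u w : paired_le u w -> \sum_y u y <= \sum_y w y.
Proof.
case=> uw uf; rewrite [leLHS]sum_reflect_pairs [leRHS]sum_reflect_pairs.
apply: lerD; apply: ler_sum => y; first by case/uw.
exact: uf.
Qed.

Lemma P_reflect_le x y : H x || (s x == x) -> H y -> P (s y) x <= P y x.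
Proof.
case/orP=> [hx hy|/eqP sx _]; first exact: P_same_side.
by rewrite -{1}sx P_reflect.
Qed.

Lemma push_reflect v x : push v (s x) = push (v \o s) x.
Proof.
rewrite /push [LHS](reindex_inj (inv_inj sK)) /=.
by apply: eq_bigr => y _; rewrite P_reflect.
Qed.

Lemma pushD u v x : push (fun y => u y + v y) x = push u x + push v x.
Proof. by rewrite /push -big_split; apply: eq_bigr => y _; rewrite mulrDl. Qed.

Lemma push_mono u w x : H x || (s x == x) -> paired_le u w -> push u x <= push w x.
Proof.
move=> hx [uw uf]; rewrite /push [leLHS]sum_reflect_pairs [leRHS]sum_reflect_pairs.
apply: lerD; last by apply: ler_sum => y /uf; apply: ler_wpM2r.
apply: ler_sum => y hy; have [le_uw le_sum] := uw y hy.
by apply: ler_pair_combination => //; rewrite P_ge0 P_reflect_le.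
Qed.

Lemma paired_le_push u w : paired_le u w -> paired_le (push u) (push w).
Proof.
move=> le_uw; have [uw uf] := le_uw.
have le_sym : paired_le (fun y => u y + u (s y)) (fun y => w y + w (s y)).
  split=> [y hy|y /eqP sy]; last by rewrite sy; have := uf _ (introT eqP sy); lra.
  by have [_ le_sum] := uw y hy; rewrite sK; split=> //; lra.
split=> [y hy|y fy]; last by apply: push_mono; rewrite ?fy ?orbT.
split; first by apply: push_mono; rewrite ?hy.
by rewrite !push_reflect -!pushD; apply: push_mono; rewrite ?hy.
Qed.

Lemma to_far_side_id g : ~~ H g -> to_far_side g = g.
Proof. by rewrite /to_far_side => /negbTE ->. Qed.

Lemma to_far_side_not_side g : ~~ H (to_far_side g).
Proof. by rewrite /to_far_side; case: ifP => [/H_reflect|/negbT]. Qed.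

Lemma to_far_side_reflect g : to_far_side (s g) = to_far_side g.
Proof.
rewrite /to_far_side; case hg: (H g); first by rewrite (negbTE (H_reflect hg)).
by have := H_cover g; rewrite hg /= => /orP[->|/eqP ->]; rewrite ?sK ?hg.
Qed.

Lemma to_far_side_fixed g : s (to_far_side g) = to_far_side g -> to_far_side g = g.
Proof.
rewrite /to_far_side; case: ifP => // hg; rewrite sK => gs.
by move: (H_reflect hg); rewrite -gs hg.
Qed.

Lemma paired_le_kill v w g : (forall x, 0 <= w x) ->
  paired_le v w -> paired_le (v \o s) w -> paired_le (kill g v) (kill (to_far_side g) w).
Proof.
move=> w_ge0 [vw vf] [vsw _]; rewrite /kill; split=> [y hy|y fy].
  have -> : (y == to_far_side g) = false.
    by apply: contraTF hy => /eqP ->; apply: to_far_side_not_side.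
  have [le_vw le_sum] := vw y hy; have [/= le_vsw _] := vsw y hy.
  have wy_ge0 := w_ge0 y.
  case: (eqVneq y g) => [<- | ne_yg].
    by rewrite side_not_fixed // /to_far_side hy eqxx /=; split; lra.
  case: (eqVneq (s y) g) => [<- | ne_syg].
    by rewrite to_far_side_id ?H_reflect // eqxx; split; lra.
  have -> : (s y == to_far_side g) = false.
    rewrite /to_far_side; case: ifP => _; last exact/negbTE.
    by rewrite (inj_eq (inv_inj sK)); exact/negbTE.
  by split.
case: (eqVneq y g) => [_ | ne_yg]; first by case: ifP.
case: ifP => [/eqP far_y | _]; last exact: vf.
have := @to_far_side_fixed g; rewrite -far_y (eqP fy) => /(_ erefl) y_g.
by rewrite y_g eqxx in ne_yg.
Qed.

Lemma dominated_push u w : dominated u w -> dominated (push u) (push w).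
Proof.
case=> w_ge0 le_uw le_usw le_wsw; split.
- by move=> x; apply: sumr_ge0 => y _; apply: mulr_ge0.
- exact: paired_le_push.
- by apply: (eq_paired_le (paired_le_push le_usw)) => // x; rewrite /= push_reflect.
- by apply: (eq_paired_le (paired_le_push le_wsw)) => // x; rewrite /= push_reflect.
Qed.

Lemma dominated_kill u w g : dominated u w -> dominated (kill g u) (kill (to_far_side g) w).
Proof.
case=> w_ge0 le_uw le_usw le_wsw.
have kill_ge0 x : 0 <= kill (to_far_side g) w x by rewrite /kill; case: ifP.
have le_uss : paired_le ((u \o s) \o s) w.
  by apply: (eq_paired_le le_uw) => // x; rewrite /= sK.
have le_wss : paired_le ((w \o s) \o s) w.
  by apply: (eq_paired_le (paired_le_refl w)) => // x; rewrite /= sK.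
have kill_s (v : T -> R) x y : kill x v (s y) = kill (s x) (v \o s) y.
  by rewrite /kill (inv_eq sK).
split => //.
- exact: paired_le_kill.
- apply: (eq_paired_le (paired_le_kill (s g) w_ge0 le_usw le_uss)).
  - by move=> x; rewrite /= kill_s.
  - by move=> x; rewrite to_far_side_reflect.
- apply: (eq_paired_le (paired_le_kill (s (to_far_side g)) w_ge0 le_wsw le_wss)).
  - by move=> x; rewrite /= kill_s.
  - by move=> x; rewrite to_far_side_reflect to_far_side_id // to_far_side_not_side.
Qed.

Lemma reflection_principle (u0 : T -> R) (f : nat -> T) (t : nat) :
  (forall x, 0 <= u0 x) -> (forall x, H x -> u0 (s x) <= u0 x) ->
  \sum_y survival u0 f t y <= \sum_y survival u0 (fun k => to_far_side (f k)) t y.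
Proof.
move=> u0_ge0 u0_side.
suff [_ le_uw _ _] : dominated (survival u0 f t) (survival u0 (fun k => to_far_side (f k)) t).
  exact: paired_le_sum.
elim: t => [|t IH] /=; last exact: dominated_kill (dominated_push IH).
by split=> //; exact: paired_le_reflect.
Qed.

End ReflectionPrinciple.

Lemma forall_ord_recr t (Q : 'I_t.+1 -> bool) :
  [forall k, Q k] = [forall k : 'I_t, Q (widen_ord (leqnSn t) k)] && Q ord_max.
Proof.
apply/forallP/andP => [allQ | [/forallP allQ Qmax] k]; first by split; [apply/forallP|].
have [j ->|->] := unliftP ord_max k => //.
suff -> : lift ord_max j = widen_ord (leqnSn t) j by [].
by apply/val_inj; rewrite /= /bump leqNgt ltn_ord.
Qed.

Section AvoidingPaths.
Variables (R : realFieldType) (T : finType) (P : T -> T -> R) (start : pred T) (f : nat -> T).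

Definition path_weight t (p : {ffun 'I_t.+1 -> T}) : R :=
  \prod_(k < t) P (p (widen_ord (leqnSn t) k)) (p (lift ord0 k)).

Definition avoids t (p : {ffun 'I_t.+1 -> T}) : bool :=
  start (p ord0) && [forall k : 'I_t, p (lift ord0 k) != f k.+1].

Definition avoid_mass t (y : T) : R :=
  \sum_(p : {ffun 'I_t.+1 -> T} | avoids p && (p ord_max == y)) path_weight p.

Lemma sum_by_endpoint t (G : {ffun 'I_t.+1 -> T} -> R) :
  \sum_(p | avoids p) G p = \sum_y \sum_(p | avoids p && (p ord_max == y)) G p.
Proof. by rewrite (partition_big (fun p : {ffun _ -> T} => p ord_max) xpredT). Qed.

Definition snoc_path t (q : {ffun 'I_t.+1 -> T}) (z : T) : {ffun 'I_t.+2 -> T} :=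
  [ffun k : 'I_t.+2 => if (k < t.+1)%N then q (inord k) else z].

Definition unsnoc_path t (p : {ffun 'I_t.+2 -> T}) : {ffun 'I_t.+1 -> T} * T :=
  ([ffun k => p (widen_ord (leqnSn _) k)], p ord_max).

Lemma snoc_path_old t q z (k : 'I_t.+2) (i : 'I_t.+1) : val k = val i -> snoc_path q z k = q i.
Proof. by move=> ki; rewrite ffunE ki ltn_ord; congr (q _); apply/val_inj; rewrite /= inordK. Qed.

Lemma snoc_path_new t q z (k : 'I_t.+2) : val k = t.+1 -> snoc_path q z k = z.
Proof. by move=> kt; rewrite ffunE kt ltnn. Qed.

Lemma sum_snoc_path t (G : {ffun 'I_t.+2 -> T} -> R) :
  \sum_p G p = \sum_q \sum_z G (snoc_path q z).
Proof.
rewrite pair_big /= (reindex (fun qz => snoc_path qz.1 qz.2)) //.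
exists (@unsnoc_path t) => [[q z] _ | p _].
  congr (_, _); last exact: snoc_path_new.
  by apply/ffunP => k; rewrite ffunE; apply: snoc_path_old.
apply/ffunP => k; have [lt_kt | ge_kt] := ltnP k t.+1.
  by rewrite (snoc_path_old _ _ (i := Ordinal lt_kt)) //= ffunE; congr (p _); apply/val_inj.
have kt : k = t.+1 :> nat by have := ltn_ord k; lia.
by rewrite (snoc_path_new _ _ kt) /=; congr (p _); apply/val_inj; rewrite /= kt.
Qed.

Lemma avoids_snoc t (q : {ffun 'I_t.+1 -> T}) z :
  avoids (snoc_path q z) = avoids q && (z != f t.+1).
Proof.
rewrite /avoids forall_ord_recr (snoc_path_old _ _ (i := ord0)) //.
rewrite (snoc_path_new _ _ (k := lift ord0 ord_max)) // andbA; congr (_ && _ && _).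
by apply: eq_forallb => k; rewrite (snoc_path_old _ _ (i := lift ord0 k)).
Qed.

Lemma path_weight_snoc t (q : {ffun 'I_t.+1 -> T}) z :
  path_weight (snoc_path q z) = path_weight q * P (q ord_max) z.
Proof.
rewrite /path_weight big_ord_recr /= (snoc_path_old _ _ (i := ord_max)) //.
rewrite (snoc_path_new _ _ (k := lift ord0 ord_max)) //; congr (_ * _).
apply: eq_bigr => k _.
rewrite (snoc_path_old _ _ (i := widen_ord (leqnSn t) k)) //.
by rewrite (snoc_path_old _ _ (i := lift ord0 k)).
Qed.

Lemma avoid_mass0 y : avoid_mass 0 y = (start y)%:R.
Proof.
rewrite /avoid_mass (eq_bigl (fun p => start y && (p == [ffun=> y]))); last first.
  move=> p; rewrite /avoids; apply/andP/andP => [[/andP[s_p _] /eqP p_y] | [s_y /eqP ->]].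
    have p_const : p = [ffun=> y].
      by apply/ffunP => k; rewrite ffunE (ord1 k) -p_y; congr (p _); apply/val_inj.
    by rewrite p_const ffunE in s_p *.
  by rewrite !ffunE s_y eqxx; split=> //; apply/forallP => -[].
case: (start y); last by rewrite big_pred0.
by rewrite big_pred1_eq /path_weight big_ord0.
Qed.

Lemma avoid_massS t y :
  avoid_mass t.+1 y = if y == f t.+1 then 0 else \sum_x avoid_mass t x * P x y.
Proof.
have step (q : {ffun 'I_t.+1 -> T}) :
    \sum_z (if avoids (snoc_path q z) && (snoc_path q z ord_max == y)
           then path_weight (snoc_path q z) else 0) =
    if avoids q && (y != f t.+1) then path_weight q * P (q ord_max) y else 0.
  rewrite (bigD1 y) //= big1 => [|z ne_zy]; last first.
    by rewrite (snoc_path_new _ _ (k := ord_max)) // (negbTE ne_zy) andbF.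
  rewrite addr0 avoids_snoc path_weight_snoc (snoc_path_new _ _ (k := ord_max)) //.
  by rewrite (eqxx y) andbT.
rewrite /avoid_mass big_mkcond sum_snoc_path /=; under eq_bigr do rewrite step.
case: eqP => [-> | _] /=; first by rewrite big1 // => q _; rewrite andbF.
under eq_bigr do rewrite andbT; rewrite -big_mkcond sum_by_endpoint.
by apply: eq_bigr => x _; rewrite mulr_suml; apply: eq_bigr => q /andP[_ /eqP ->].
Qed.

Lemma avoid_mass_survival t y : avoid_mass t y = survival P (fun x => (start x)%:R) f t y.
Proof.
elim: t y => [|t IH] y; first exact: avoid_mass0.
rewrite avoid_massS /= /kill /push; case: ifP => // _.
by apply: eq_bigr => x _; rewrite IH.
Qed.

End AvoidingPaths.

Section Mirror.
Local Open Scope nat_scope.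
Variable n : nat.

Definition mirror (c v : nat) : nat := if v <= c then c - v else c + n - v.

Definition mirror_on (c : nat) (side : pred nat) (v : nat) : nat :=
  if side v then mirror c v else v.

Lemma mod_succ u : u < n -> (u + 1) %% n = if u.+1 < n then u.+1 else 0.
Proof.
move=> lt_un; case: ifP => [lt_u1n | /negbT]; first by rewrite addn1 modn_small.
rewrite -leqNgt => le_nu1; have -> : u + 1 = n by lia.
by rewrite modnn.
Qed.

Lemma mod_pred u : u < n -> (u + n - 1) %% n = if 0 < u then u.-1 else n.-1.
Proof.
move=> lt_un; case: ifP => [u_gt0 | /negbT u_eq0]; last by rewrite modn_small; lia.
have -> : u + n - 1 = u.-1 + n by lia.
by rewrite modnDr modn_small //; lia.
Qed.

Section Center.
Variable c : nat.
Hypothesis lt_cn : c < n.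

Lemma mirror_lt v : v < n -> mirror c v < n.
Proof. by rewrite /mirror => lt_vn; case: ifP => [_ | /negbT]; lia. Qed.

Lemma mirrorK v : v < n -> mirror c (mirror c v) = v.
Proof. by rewrite /mirror => lt_vn; case: (leqP v c) => ?; case: ifP => [? | /negbT ?]; lia. Qed.

Lemma mirror_inj u v : u < n -> v < n -> (mirror c u == mirror c v) = (u == v).
Proof. by move=> lt_un lt_vn; apply/eqP/eqP => [e | -> //]; rewrite -(mirrorK lt_un) e mirrorK. Qed.

Lemma mirror_succ u v : u < n -> v < n ->
  (mirror c v == (mirror c u + 1) %% n) = (v == (u + n - 1) %% n).
Proof.
move=> lt_un lt_vn; rewrite mod_succ ?mirror_lt // mod_pred // /mirror.
case: (leqP u c) => ?; case: (leqP v c) => ?.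
  all: by do 2 case: ifP => [? | /negbT ?]; apply/eqP/eqP; lia.
Qed.

Lemma mirror_pred u v : u < n -> v < n ->
  (mirror c v == (mirror c u + n - 1) %% n) = (v == (u + 1) %% n).
Proof.
move=> lt_un lt_vn; rewrite mod_pred ?mirror_lt // mod_succ // /mirror.
case: (leqP u c) => ?; case: (leqP v c) => ?.
  all: by do 2 case: ifP => [? | /negbT ?]; apply/eqP/eqP; lia.
Qed.

End Center.

(* [side] is one of the two halves of Z_n cut out by the axis of [mirror c]; it
   contains 0, and the only edges of the cycle crossing the axis join a point
   of [side] to its own mirror image. *)
Record mirror_half (c : nat) (side : pred nat) : Prop := MirrorHalf {
  mirror_half_disjoint : forall v, v < n -> side v -> ~~ side (mirror c v);
  mirror_half_cover : forall v, v < n -> [|| side v, side (mirror c v) | mirror c v == v];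
  mirror_half_edge : forall u v, u < n -> v < n -> side u -> side v ->
    (u == (mirror c v + 1) %% n) || (u == (mirror c v + n - 1) %% n) -> u = v;
  mirror_half_origin : forall v, v < n -> side v -> mirror c v != 0 }.

Variable h : nat.
Hypothesis n_halves : n = h + h \/ n = h + h + 1.

(* The half moved by the reflection [mirror j.*2.+1] about j + 1/2. *)
Definition step_side (j v : nat) : bool := (v <= j) || (n - h + 1 + j <= v).

Lemma mirror_half_step j : j < h -> mirror_half j.*2.+1 (step_side j).
Proof.
move=> lt_jh; have lt_cn : j.*2.+1 < n by lia.
split=> [v lt_vn | v lt_vn | u v lt_un lt_vn | v lt_vn];
  rewrite /step_side ?mod_succ ?mod_pred ?mirror_lt // /mirror;
  by case: (leqP v j.*2.+1) => ?; repeat case: ifP => [? | /negbT ?]; lia.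
Qed.

Definition center_side (v : nat) : bool := h < v.

Lemma mirror_half_center : mirror_half 0 center_side.
Proof.
split=> [v lt_vn | v lt_vn | u v lt_un lt_vn | v lt_vn];
  rewrite /center_side ?mod_succ ?mod_pred ?mirror_lt //; try lia;
  by rewrite /mirror; case: (leqP v 0) => ?; repeat case: ifP => [? | /negbT ?]; lia.
Qed.

Fixpoint fold_steps (k v : nat) : nat :=
  if k is k'.+1 then mirror_on k'.*2.+1 (step_side k') (fold_steps k' v) else v.

Lemma fold_steps_bound k v : v < n -> 0 < k <= h -> k <= fold_steps k v <= n - h.
Proof.
move=> lt_vn; elim: k => [|k IH] //= le_kh; rewrite /mirror_on /step_side /mirror.
have [k0 | k_gt0] := posnP k.
  by rewrite k0 /=; case: (leqP v 1) => ?; case: ifP => [? | /negbT ?]; lia.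
have := IH (ltac:(lia)) => ?.
by case: (leqP (fold_steps k v) k.*2.+1) => ?; case: ifP => [? | /negbT ?]; lia.
Qed.

Lemma fold_to_center v : v < n -> mirror_on 0 center_side (fold_steps h v) = h.
Proof.
move=> lt_vn; rewrite /mirror_on /center_side /mirror.
have [h0 | h_gt0] := posnP h.
  by rewrite h0 /=; case: ifP => [? | /negbT ?]; try case: (leqP v 0) => ?; lia.
have := fold_steps_bound lt_vn (ltac:(lia) : 0 < h <= h) => ?.
by case: (leqP (fold_steps h v) 0) => ?; case: ifP => [? | /negbT ?]; lia.
Qed.

End Mirror.

Lemma lazyP_ge0 (R : realFieldType) (n d : nat) (x y : pt n d) : 0 <= lazyP R x y.
Proof.
rewrite /lazyP addr_ge0 ?divr_ge0 ?sumr_ge0 // => i _.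
by rewrite divr_ge0 ?addr_ge0 ?mulr_ge0.
Qed.

Section CoordinateMirror.
Variables (R : realFieldType) (n d : nat) (i0 : 'I_d) (c : nat) (lt_cn : (c < n)%N).
Variable side : pred nat.
Hypothesis hside : mirror_half n c side.

Definition mirror_ord (v : 'I_n) : 'I_n := Ordinal (mirror_lt lt_cn (ltn_ord v)).

Definition mirror_at (x : pt n d) : pt n d :=
  [ffun j => if j == i0 then mirror_ord (x j) else x j].

Definition side_at (x : pt n d) : bool := side (x i0).

Lemma mirror_at_i0 x : val (mirror_at x i0) = mirror n c (x i0).
Proof. by rewrite ffunE eqxx. Qed.

Lemma mirror_at_ne x j : j != i0 -> mirror_at x j = x j.
Proof. by rewrite ffunE => /negbTE ->. Qed.

Lemma mirror_atK : involutive mirror_at.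
Proof.
move=> x; apply/ffunP => j; have [-> | ne_ji0] := eqVneq j i0; last by rewrite !mirror_at_ne.
by apply/val_inj; rewrite !mirror_at_i0 mirrorK.
Qed.

Lemma side_at_disjoint x : side_at x -> ~~ side_at (mirror_at x).
Proof. by rewrite /side_at mirror_at_i0; apply: mirror_half_disjoint. Qed.

Lemma side_at_cover x : [|| side_at x, side_at (mirror_at x) | mirror_at x == x].
Proof.
rewrite /side_at mirror_at_i0.
have := mirror_half_cover hside (ltn_ord (x i0)).
case/or3P=> [-> | -> | /eqP fix_x]; rewrite ?orbT //.
suff -> : mirror_at x == x by rewrite !orbT.
apply/eqP/ffunP => j; have [-> | ne_ji0] := eqVneq j i0; last by rewrite mirror_at_ne.
by apply/val_inj; rewrite mirror_at_i0.
Qed.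

Lemma is_plus_e_mirror i x y : is_plus_e i (mirror_at x) (mirror_at y) =
  (if i == i0 then is_minus_e i x y else is_plus_e i x y).
Proof.
rewrite /is_plus_e /is_minus_e; have [-> | ne_ii0] := eqVneq i i0; apply: eq_forallb => j.
  have [-> | ne_ji0] := eqVneq j i0; last by rewrite !mirror_at_ne.
  by rewrite !mirror_at_i0 mirror_succ.
have [-> | ne_ji0] := eqVneq j i0.
  by rewrite (eq_sym i0 i) (negbTE ne_ii0) !mirror_at_i0 mirror_inj.
by rewrite !mirror_at_ne //; case: eqP => [-> |]; rewrite ?mirror_at_ne.
Qed.

Lemma is_minus_e_mirror i x y : is_minus_e i (mirror_at x) (mirror_at y) =
  (if i == i0 then is_plus_e i x y else is_minus_e i x y).
Proof.
rewrite /is_plus_e /is_minus_e; have [-> | ne_ii0] := eqVneq i i0; apply: eq_forallb => j.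
  have [-> | ne_ji0] := eqVneq j i0; last by rewrite !mirror_at_ne.
  by rewrite !mirror_at_i0 mirror_pred.
have [-> | ne_ji0] := eqVneq j i0.
  by rewrite (eq_sym i0 i) (negbTE ne_ii0) !mirror_at_i0 mirror_inj.
by rewrite !mirror_at_ne //; case: eqP => [-> |]; rewrite ?mirror_at_ne.
Qed.

Lemma lazyP_mirror x y : lazyP R (mirror_at x) (mirror_at y) = lazyP R x y.
Proof.
rewrite /lazyP (can_eq mirror_atK); congr (_ + _); apply: eq_bigr => i _.
by rewrite is_plus_e_mirror is_minus_e_mirror; case: ifP; rewrite // addrC.
Qed.

Lemma step_to_mirror_off_axis i x y : i != i0 -> side_at x -> side_at y ->
  (is_plus_e i (mirror_at y) x || is_minus_e i (mirror_at y) x) = false.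
Proof.
move=> ne_ii0 side_x side_y; apply/negbTE/negP => /orP[] /forallP/(_ i0);
  rewrite (eq_sym i0 i) (negbTE ne_ii0) => /eqP/val_inj e;
  by move: (side_at_disjoint side_y) side_x; rewrite /side_at e => /negbTE ->.
Qed.

Lemma step_to_mirror_on_axis x y : side_at x -> side_at y ->
  is_plus_e i0 (mirror_at y) x || is_minus_e i0 (mirror_at y) x -> x = y.
Proof.
move=> side_x side_y step; apply/ffunP => j; have [-> | ne_ji0] := eqVneq j i0.
  apply/val_inj/(mirror_half_edge hside); rewrite ?ltn_ord //.
  by case/orP: step => /forallP/(_ i0); rewrite eqxx mirror_at_i0 => ->; rewrite ?orbT.
by case/orP: step => /forallP/(_ j); rewrite (negbTE ne_ji0) mirror_at_ne // => /eqP/val_inj.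
Qed.

Lemma lazyP_to_mirror x y : side_at x -> side_at y ->
  lazyP R (mirror_at y) x =
  ((is_plus_e i0 (mirror_at y) x)%:R + (is_minus_e i0 (mirror_at y) x)%:R) / (4 * d%:R).
Proof.
move=> side_x side_y; have ne_yx : (mirror_at y == x) = false.
  by apply/negbTE; apply: contraNneq (side_at_disjoint side_y) => ->.
rewrite /lazyP ne_yx mul0r add0r (bigD1 i0) //= big1 ?addr0 // => i ne_ii0.
move/negbT/norP: (step_to_mirror_off_axis ne_ii0 side_x side_y) => [/negbTE -> /negbTE ->].
by rewrite addr0 mul0r.
Qed.

Lemma lazyP_same_side x y : side_at x -> side_at y -> lazyP R (mirror_at y) x <= lazyP R y x.
Proof.
move=> side_x side_y; rewrite lazyP_to_mirror //.
have [<- | ne_yx] := eqVneq y x; last first.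
  case step : (is_plus_e i0 (mirror_at y) x || is_minus_e i0 (mirror_at y) x).
    by move/eqP: ne_yx; rewrite (step_to_mirror_on_axis side_x side_y step).
  by move/negbT/norP: step => [/negbTE -> /negbTE ->]; rewrite addr0 mul0r lazyP_ge0.
have d_ge1 : 1 <= d%:R :> R by rewrite ler1n; case: (d) i0 => [[]|].
apply: (@le_trans _ _ (1 / 2)).
  rewrite ler_pdivrMr; last by rewrite mulr_gt0 // (lt_le_trans ltr01 d_ge1).
  by case: (is_plus_e _ _ _); case: (is_minus_e _ _ _); rewrite /=; lra.
rewrite /lazyP (eqxx y) -[X in X <= _]addr0 lerD // sumr_ge0 // => i _.
by rewrite divr_ge0 ?addr_ge0 ?mulr_ge0.
Qed.

End CoordinateMirror.

Lemma halves_cases (n : nat) : n = (n./2 + n./2)%N \/ n = (n./2 + n./2 + 1)%N.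
Proof. by have := odd_double_half n; case: (odd n) => /= <-; rewrite -addnn; lia. Qed.

Section Improvement.
Variables (R : realFieldType) (n d t : nat).

Definition improves (M : pt n d -> pt n d) : Prop :=
  forall f, avoid_prob R t f <= avoid_prob R t (fun k => M (f k)).

Lemma avoid_prob_survival f :
  avoid_prob R t f = \sum_y survival (@lazyP R n d) (fun x => (is_origin x)%:R) f t y.
Proof.
have -> : avoid_prob R t f =
    \sum_(p : {ffun 'I_t.+1 -> pt n d} | avoids (@is_origin n d) f p) path_weight (@lazyP R n d) p.
  by [].
by rewrite sum_by_endpoint; apply: eq_bigr => y _; apply: avoid_mass_survival.
Qed.

Lemma improves_id : improves id.
Proof. by []. Qed.

Lemma improves_comp M1 M2 : improves M1 -> improves M2 -> improves (fun x => M2 (M1 x)).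
Proof. by move=> imp1 imp2 f; apply: le_trans (imp1 f) (imp2 _). Qed.

Section OneMirror.
Variables (i0 : 'I_d) (c : nat) (lt_cn : (c < n)%N) (side : pred nat).
Hypothesis hside : mirror_half n c side.

Definition fold_coord : pt n d -> pt n d :=
  to_far_side (mirror_at i0 lt_cn) (side_at i0 side).

Lemma improves_mirror : improves fold_coord.
Proof.
move=> f; rewrite !avoid_prob_survival.
apply: reflection_principle.
- exact: lazyP_ge0.
- exact: mirror_atK.
- exact: side_at_disjoint.
- exact: side_at_cover.
- exact: lazyP_mirror.
- exact: lazyP_same_side.
- by move=> x; case: (is_origin x).
move=> x side_x; have -> : is_origin (mirror_at i0 lt_cn x) = false.
  apply/negbTE/forallP => /(_ i0); rewrite mirror_at_i0.
  by apply/negP; apply: (mirror_half_origin hside).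
by case: (is_origin x).
Qed.

Lemma fold_coord_i0 g : val (fold_coord g i0) = mirror_on n c side (g i0).
Proof.
by rewrite /fold_coord /to_far_side /mirror_on /side_at; case: ifP; rewrite ?mirror_at_i0.
Qed.

Lemma fold_coord_ne g j : j != i0 -> fold_coord g j = g j.
Proof. by move=> ne_ji0; rewrite /fold_coord /to_far_side; case: ifP; rewrite ?mirror_at_ne. Qed.

End OneMirror.

Hypothesis n_gt0 : (0 < n)%N.

Lemma improves_coord_steps (i0 : 'I_d) k : (k <= n./2)%N -> exists M, [/\ improves M,
  forall g, val (M g i0) = fold_steps n n./2 k (g i0) & forall g j, j != i0 -> M g j = g j].
Proof.
elim: k => [|k IH] le_kh; first by exists id; split=> //; apply: improves_id.
have [M [improves_M M_i0 M_ne]] := IH (ltnW le_kh).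
have lt_cn : (k.*2.+1 < n)%N by case: (halves_cases n) => ->; lia.
have hside := mirror_half_step (halves_cases n) le_kh.
exists (fun x => fold_coord i0 lt_cn (step_side n n./2 k) (M x)); split.
- by apply: improves_comp improves_M _; apply: improves_mirror.
- by move=> g; rewrite fold_coord_i0 M_i0.
- by move=> g j ne_ji0; rewrite fold_coord_ne // M_ne.
Qed.

Lemma improves_coord (i0 : 'I_d) : exists M, [/\ improves M,
  forall g, val (M g i0) = n./2 & forall g j, j != i0 -> M g j = g j].
Proof.
have [M [improves_M M_i0 M_ne]] := improves_coord_steps i0 (leqnn n./2).
have hside := mirror_half_center (halves_cases n).
exists (fun x => fold_coord i0 n_gt0 (center_side n./2) (M x)); split.
- by apply: improves_comp improves_M _; apply: improves_mirror.
- by move=> g; rewrite fold_coord_i0 M_i0 fold_to_center ?ltn_ord //; apply: halves_cases.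
- by move=> g j ne_ji0; rewrite fold_coord_ne // M_ne.
Qed.

Lemma improves_coords (a : pt n d) (a_half : forall i, val (a i) = n./2) k : (k <= d)%N ->
  exists M, improves M /\ forall g (j : 'I_d), (j < k)%N -> M g j = a j.
Proof.
elim: k => [|k IH] le_kd; first by exists id; split=> //; apply: improves_id.
have [M [improves_M M_a]] := IH (ltnW le_kd).
have [N [improves_N N_k N_ne]] := improves_coord (Ordinal le_kd).
exists (fun x => N (M x)); split; first exact: improves_comp.
move=> g j; rewrite ltnS leq_eqVlt => /orP[/eqP j_k | lt_jk].
  have -> : j = Ordinal le_kd by apply/val_inj.
  by apply/val_inj; rewrite N_k a_half.
rewrite N_ne ?M_a //; apply: contraTneq lt_jk => ->; by rewrite ltnn.
Qed.

End Improvement.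

Theorem theorem1p2 (R : realFieldType) (n d : nat) (hn : (0 < n)%N) (hd : (0 < d)%N)
  (f : nat -> pt n d) (a : pt n d) (ha : forall i, val (a i) = n./2) (t : nat)
  (ht : (1 <= t)%N) :
  avoid_prob R t f <= avoid_prob R t (fun _ => a).
Proof.
have [M [improves_M M_a]] := improves_coords R t hn ha (leqnn d).
have M_const g : M g = a by apply/ffunP => j; rewrite M_a.
have M_f : avoid_prob R t (fun k => M (f k)) = avoid_prob R t (fun _ => a).
  by apply: eq_bigl => p; under eq_forallb do rewrite M_const.
by rewrite -M_f; apply: improves_M.
Qed.
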